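(* Let $G$ be a finite $2$-group of order $2^n$ and let $M$ be a normal subgroup of $G$ of order $2^r$. Then for every $0\leq k\leq n$, $$s_k(G)\leq s_k(G/M\times C_2^r).$$
   Context: For a finite $2$-group $G$ of order $2^n$ and $0\le k\le n$, $s_k(G)$ denotes the number of subgroups of $G$ of order $2^k$. $C_2^r$ denotes the elementary abelian $2$-group of order $2^r$. *)

From mathcomp Require Import all_boot all_fingroup all_solvable.
Set Implicit Arguments. Unset Strict Implicit. Unset Printing Implicit Defensive.

Definition s_k (gT : finGroupType) (G : {set gT}) (k : nat) : nat :=
  #|[set H : {group gT} | (H \subset G) && (#|H| == 2 ^ k)]|.

(* Induct on |M|.  A normal subgroup N of order 2 of a 2-group is central;
   take one inside M and split E = <[c]> \x B with #[c] = 2.  Subgroups H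
   containing N are sent to (H/N) x <[c]>.  A subgroup H with H :&: N = 1 lies
   in H0 N = H0 \x N, where H0 is a complement of N fixed in advance for the
   quotient H/N, and is sent to its image under x |-> (xN, 1 or c according as
   x lies in H0 or not), an injective morphism on H0 N.  Whether (1, c) lies in
   the image recovers whether N <= H, and the first projection recovers H/N,
   so this is an order-preserving injection of subgroups, whence
   s_k(G) <= s_k(G/N x <[c]>).  To iterate without comparing iterated
   quotients up to isomorphism, the induction is stated for any morphism f
   with #|'ker f| = #|E| and any direct product f(G) \x E. *)

From mathcomp Require Import all_boot all_fingroup all_solvable.
Set Implicit Arguments. Unset Strict Implicit. Unset Printing Implicit Defensive.

Import GroupScope.

Lemma leq_s_k_inj (gT rT : finGroupType) (G : {set gT}) (X : {set rT})
    (F : {group gT} -> {set rT}) k :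
  {in subgroups G &, injective F} ->
  (forall H : {group gT}, H \subset G ->
     [/\ group_set (F H), F H \subset X & #|F H| = #|H|]) ->
  s_k G k <= s_k X k.
Proof.
move=> injF FP; pose FG H := <<F H>>%G.
have FGE (H : {group gT}) : H \subset G -> FG H :=: F H.
  by case/FP=> gF _ _; exact: gen_set_id.
rewrite /s_k -(card_in_imset (f := FG)) => [|H1 H2]; last first.
  rewrite !inE => /andP[sH1G _] /andP[sH2G _] eqFG.
  by apply: injF; rewrite ?inE // -FGE // -[F H2]FGE // eqFG.
apply/subset_leq_card/subsetP=> _ /imsetP[H + ->]; rewrite inE => /andP[sHG oH].
by have [_ sFX oF] := FP H sHG; rewrite inE FGE // sFX oF.
Qed.

Lemma leq_s_k_injm (gT rT : finGroupType) (G : {group gT})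
    (f : {morphism G >-> rT}) k :
  'injm f -> s_k G k <= s_k (f @* G) k.
Proof.
move=> injf; apply: (leq_s_k_inj (F := fun H => f @* H)) => [H1 H2|H sHG].
  by rewrite !inE => sH1G sH2G /(injm_morphim_inj injf sH1G sH2G)/val_inj.
by rewrite groupP morphimS // card_injm.
Qed.

Section IndexTwoSign.

Variables (gT cT : finGroupType) (D H : {group gT}) (c : cT).
Hypotheses (sHD : H \subset D) (iHD : #|D : H| = 2) (c2 : c ^+ 2 = 1).

Definition index2_sign x : cT := if x \in H then 1 else c.

Lemma index2_signM : {in D &, {morph index2_sign : x y / x * y}}.
Proof.
move=> x y Dx Dy; rewrite /index2_sign.
case Hx: (x \in H); first by rewrite mul1g groupMl.
case Hy: (y \in H); first by rewrite mulg1 groupMr ?Hx.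
have: y^-1 \in H :* x by rewrite (rcoset_index2 sHD iHD) ?inE ?groupV ?Hx ?Hy.
case/rcosetP=> h Hh eq_y'_hx.
have ->: x * y = h^-1 by rewrite -[y]invgK eq_y'_hx invMg mulKVg.
by rewrite groupV Hh -c2 expgS expg1.
Qed.

End IndexTwoSign.

Section TwistedEmbedding.

Variables (gT cT : finGroupType) (N H0 : {group gT}) (c : cT).
Hypotheses (oN : #|N| = 2) (cH0N : H0 \subset 'C(N)) (tiH0N : H0 :&: N = 1).
Hypothesis oc : #[c] = 2.

Lemma index_central_join : #|H0 <*> N : H0| = 2.
Proof.
by rewrite cent_joinEr 1?centsC // indexMg -indexgI setIC tiH0N indexg1.
Qed.

Lemma central_join_norm : H0 <*> N \subset 'N(N).
Proof. by rewrite join_subG cents_norm ?normG. Qed.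

Definition twist x : coset_of N * cT := (coset N x, index2_sign H0 c x).

Lemma twist_morphM : {in H0 <*> N &, {morph twist : x y / x * y}}.
Proof.
move=> x y Dx Dy; have nND := subsetP central_join_norm.
have c2 : c ^+ 2 = 1 by rewrite -oc expg_order.
by rewrite /twist morphM ?nND // (index2_signM (joing_subl _ _) index_central_join).
Qed.

Canonical twist_morphism := Morphism twist_morphM.

Lemma injm_twist : 'injm twist_morphism.
Proof.
apply/subsetP=> x /morphpreP[Dx /set1P[/coset_idr Nx]]; rewrite /index2_sign.
have {}Nx: x \in N by apply: Nx; apply: (subsetP central_join_norm).
case: ifP => [H0x _ | _ /eqP]; last by rewrite -order_eq1 oc.
by rewrite -tiH0N inE H0x.
Qed.

Lemma fst_twist (A : {set gT}) :
  A \subset H0 <*> N -> [set u.1 | u in twist @: A] = A / N.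
Proof.
move=> sAD; rewrite -imset_comp [in RHS]/quotient morphimEsub //.
exact: subset_trans sAD central_join_norm.
Qed.

Lemma twist_sub_setX (A : {set gT}) :
  A \subset H0 <*> N -> twist @: A \subset setX (A / N) <[c]>.
Proof.
move=> sAD; apply/subsetP=> _ /imsetP[x Ax ->].
rewrite inE -(fst_twist sAD); apply/andP; split.
  exact: (imset_f _ (imset_f _ Ax)).
by rewrite /= /index2_sign; case: ifP; rewrite ?group1 ?cycle_id.
Qed.

Lemma notin_twist_1c (A : {set gT}) :
  A \subset H0 <*> N -> A :&: N = 1 -> (1, c) \notin twist @: A.
Proof.
move=> sAD tiAN; apply/imsetP=> [[x Ax [/esym/coset_idr Nx]]].
have {}Nx: x \in N by apply/Nx/(subsetP central_join_norm)/(subsetP sAD).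
have: x \in A :&: N by rewrite inE Ax.
rewrite tiAN => /set1P->; rewrite /index2_sign group1 => /eqP.
by rewrite -order_eq1 oc.
Qed.

End TwistedEmbedding.

Section CentralInvolutionCount.

Variables (gT cT : finGroupType) (G N : {group gT}) (c : cT).
Hypotheses (cGN : G \subset 'C(N)) (oN : #|N| = 2) (oc : #[c] = 2).

Let nNG : G \subset 'N(N). Proof. exact: cents_norm. Qed.

Let tiN (H : {group gT}) : ~~ (N \subset H) -> H :&: N = 1.
Proof. by move=> notsNH; rewrite setIC prime_TIg ?oN. Qed.

(* One complement per quotient K: subgroups with the same image in G / N are
   then embedded through the same [twist], which makes [embed_subgroup]
   injective. *)
Definition complement_rep (K : {set coset_of N}) : {group gT} :=
  odflt 1%G [pick H : {group gT} | [&& H \subset G, H :&: N == 1 & H / N == K]].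

Lemma complement_repP (H : {group gT}) : H \subset G -> H :&: N = 1 ->
  let H0 := complement_rep (H / N) in
  [/\ H0 \subset G, H0 :&: N = 1 & H0 / N = H / N].
Proof.
move=> sHG tiHN; rewrite /complement_rep; case: pickP => [H0 | /(_ H)].
  by case/and3P=> ? /eqP ? /eqP.
by rewrite sHG tiHN !eqxx.
Qed.

Lemma sub_complement_rep_join (H : {group gT}) : H \subset G -> H :&: N = 1 ->
  H \subset complement_rep (H / N) <*> N.
Proof.
move=> sHG tiHN; have [sH0G _ eqH0N] := complement_repP sHG tiHN.
rewrite joingC -quotientYK ?(subset_trans sH0G) // eqH0N -sub_morphim_pre //.
exact: subset_trans sHG nNG.
Qed.

Definition embed_subgroup (H : {group gT}) : {set coset_of N * cT} :=
  if N \subset H then setX (H / N) <[c]> else twist N (complement_rep (H / N)) c @: H.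

Lemma embed_subgroupP (H : {group gT}) : H \subset G ->
  [/\ group_set (embed_subgroup H), embed_subgroup H \subset setX (G / N) <[c]>
     & #|embed_subgroup H| = #|H|].
Proof.
move=> sHG; rewrite /embed_subgroup; case: ifPn => [sNH | /tiN tiHN].
  rewrite group_setX setXS ?quotientS // cardsX card_quotient.
    by split=> //; rewrite -orderE oc -(Lagrange sNH) oN mulnC.
  exact: subset_trans sHG nNG.
have [sH0G tiH0N _] := complement_repP sHG tiHN.
have cH0N := subset_trans sH0G cGN.
have sHD := sub_complement_rep_join sHG tiHN.
pose tw := twist_morphism oN cH0N tiH0N oc.
rewrite -(morphimEsub tw sHD) groupP card_injm ?injm_twist //.
rewrite morphimEsub // (subset_trans (twist_sub_setX c cH0N sHD)) //.
by rewrite setXS ?quotientS.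
Qed.

Lemma mem_embed_subgroup_1c (H : {group gT}) : H \subset G ->
  ((1, c) \in embed_subgroup H) = (N \subset H).
Proof.
move=> sHG; rewrite /embed_subgroup; case: ifPn => [_ | /tiN tiHN].
  by rewrite inE group1 cycle_id.
have [sH0G tiH0N _] := complement_repP sHG tiHN.
have sHD := sub_complement_rep_join sHG tiHN.
by rewrite (negbTE (notin_twist_1c (subset_trans sH0G cGN) oc sHD tiHN)).
Qed.

Lemma fst_embed_subgroup (H : {group gT}) : H \subset G ->
  [set u.1 | u in embed_subgroup H] = H / N.
Proof.
move=> sHG; rewrite /embed_subgroup; case: ifPn => [_ | /tiN tiHN].
  apply/setP=> a; apply/imsetP/idP => [[[b d] /setXP[Hb _] ->] // | Ha].
  by exists (a, 1); rewrite // inE Ha group1.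
have [sH0G _ _] := complement_repP sHG tiHN.
exact: (fst_twist c (subset_trans sH0G cGN) (sub_complement_rep_join sHG tiHN)).
Qed.

Lemma embed_subgroup_inj : {in subgroups G &, injective embed_subgroup}.
Proof.
move=> H1 H2; rewrite !inE => sH1G sH2G eqE.
have eqHN : H1 / N = H2 / N by rewrite -!fst_embed_subgroup ?eqE.
have := mem_embed_subgroup_1c sH1G; rewrite eqE mem_embed_subgroup_1c //.
case sNH1: (N \subset H1) => sNH2.
  have nsN (H : {group gT}) : H \subset G -> N \subset H -> N <| H.
    by move=> sHG sNH; rewrite /normal sNH (subset_trans sHG nNG).
  by apply/val_inj/(quotient_inj (nsN _ sH1G sNH1) (nsN _ sH2G sNH2)).
have [tiH1N tiH2N] := (tiN (negbT sNH1), tiN (negbT sNH2)).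
have sH1D := sub_complement_rep_join sH1G tiH1N.
have sH2D := sub_complement_rep_join sH2G tiH2N.
have [sH0G tiH0N _] := complement_repP sH2G tiH2N.
have cH0N := subset_trans sH0G cGN.
move: eqE sH1D; rewrite /embed_subgroup sNH1 sNH2 eqHN => eqE sH1D.
apply/val_inj/(injm_morphim_inj (injm_twist oN cH0N tiH0N oc) sH1D sH2D).
by rewrite !morphimEsub.
Qed.

Lemma leq_s_k_central_involution k : s_k G k <= s_k (setX (G / N) <[c]>) k.
Proof.
exact: leq_s_k_inj embed_subgroup_inj embed_subgroupP.
Qed.

End CentralInvolutionCount.

Section MulPair.

Variables (aT xT : finGroupType) (A : {group aT}) (B : {group xT}).
Variable g : {morphism A >-> xT}.
Hypothesis cBgA : B \subset 'C(g @* A).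

Definition mulpair (u : aT * xT) : xT := g u.1 * u.2.

Lemma mulpair_morphM : {in setX A B &, {morph mulpair : u v / u * v}}.
Proof.
move=> [a1 b1] [a2 b2] /setXP[Aa1 Bb1] /setXP[Aa2 Bb2].
have cb1 : commute b1 (g a2) by apply: (centsP cBgA); rewrite ?mem_morphim.
by rewrite /mulpair /= morphM // !mulgA; congr (_ * _); rewrite -!mulgA cb1.
Qed.

Canonical mulpair_morphism := Morphism mulpair_morphM.

Lemma im_mulpair : mulpair_morphism @* setX A B = g @* A * B.
Proof.
rewrite [LHS]morphimEsub //; apply/setP=> x; apply/imsetP/mulsgP.
  by case=> [[a b]] /setXP[Aa Bb] ->; exists (g a) b; rewrite ?mem_morphim.
by case=> _ b /morphimP[a _ Aa ->] Bb ->; exists (a, b); rewrite ?inE ?Aa.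
Qed.

Lemma card_ker_mulpair : g @* A :&: B = 1 -> #|'ker mulpair_morphism| = #|'ker g|.
Proof.
move=> tigAB.
have cardD (dT : finGroupType) (D : {group dT}) (f : {morphism D >-> xT}) :
    #|D| = (#|'ker f| * #|f @* D|)%N.
  by rewrite -card_morphpre // morphimGK ?subsetIl.
have := cardD _ _ mulpair_morphism; rewrite im_mulpair TI_cardMg // cardsX.
rewrite [#|A|](cardD _ _ g) mulnA => /eqP; rewrite eqn_pmul2r ?cardG_gt0 //.
by rewrite eqn_pmul2r ?cardG_gt0 // => /eqP.
Qed.

End MulPair.

Lemma prime_normal_sub_center (gT : finGroupType) (G N : {group gT}) :
  nilpotent G -> N <| G -> prime #|N| -> N \subset 'Z(G).
Proof.
move=> nilG nsNG prN.
have ntN : N :!=: 1 by rewrite trivg_card1 eq_sym neq_ltn prime_gt1 ?orbT.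
apply: contraLR (meet_center_nil nilG nsNG ntN) => notsNZ.
by rewrite negbK prime_TIg.
Qed.

Lemma central_order2_sub (gT : finGroupType) (G K : {group gT}) :
  2.-group G -> K <| G -> 2 %| #|K| ->
  exists N : {group gT}, [/\ N \subset K, N <| G, G \subset 'C(N) & #|N| = 2].
Proof.
move=> pG nsKG evenK.
have [|N [sNK nsNG oN]] := normal_pgroup pG nsKG (_ : 1 <= logn 2 #|K|).
  by rewrite logn_gt0 mem_primes cardG_gt0 evenK.
rewrite expn1 in oN; exists N; split=> //.
have sNZ : N \subset 'Z(G) by rewrite prime_normal_sub_center ?(pgroup_nil pG) ?oN.
by rewrite centsC (subset_trans sNZ) ?subsetIr.
Qed.

Lemma leq_s_k_dprod_abelem m (gT xT : finGroupType) (G : {group gT})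
    (E X : {group xT}) (f : {morphism G >-> xT}) k :
  2.-group G -> #|'ker f| = (2 ^ m)%N -> f @* G \x E = X ->
  2.-abelem E -> #|E| = (2 ^ m)%N -> s_k G k <= s_k X k.
Proof.
elim: m gT G E X f => [|m IHm] gT G E X f pG oK defX abE oE.
  have injf : 'injm f by apply/trivgP/card_le1_trivg; rewrite oK.
  have E1 : E :=: 1 by apply/card_le1_trivg; rewrite oE.
  by rewrite -defX E1 dprodg1 leq_s_k_injm.
have [|N [sNK nsNG cGN oN]] := central_order2_sub pG (ker_normal f).
  by rewrite oK expnS dvdn_mulr.
have [c Ec oc] : {c | c \in E & #[c] = 2}.
  by apply: Cauchy; rewrite ?oE ?expnS ?dvdn_mulr.
have [B [sBE oB defE]] := p_abelem_split1 abE Ec.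
have nNG := normal_norm nsNG.
have sKNf : 'ker (coset N) \subset 'ker f by rewrite ker_coset.
pose g := factm_morphism sKNf nNG.
have img : g @* (G / N) = f @* G by rewrite morphim_factm.
have [_ _ cfGE tifGE] := dprodP defX.
have sCE : <[c]> \subset E by rewrite cycle_subG.
have cfGC : <[c]> \subset 'C(f @* G) by rewrite (subset_trans sCE) // centsC.
have tifGC : f @* G :&: <[c]> = 1 by apply/trivgP; rewrite -tifGE setIS.
have cCg : <[c]> \subset 'C(g @* (G / N)) by rewrite img.
have tigC : g @* (G / N) :&: <[c]> = 1 by rewrite img.
(* (xN, y) |-> f(x) y maps G/N x <[c]> onto f(G) <[c]> = f(G) \x <[c]>, with
   a kernel of order #|'ker f| / 2, and X = (f(G) \x <[c]>) \x B. *)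
pose h := mulpair_morphism cCg.
apply: leq_trans (leq_s_k_central_involution cGN oN oc k) _.
apply: (IHm _ _ B X h).
- rewrite /pgroup cardsX pnatM -orderE oc andbT.
  exact: quotient_pgroup.
- rewrite card_ker_mulpair // ker_factm card_quotient; last first.
    exact: subset_trans (subsetIl _ _) nNG.
  by rewrite -divgS // oK oN expnS mulKn.
- by rewrite im_mulpair morphim_factm -(dprodE cfGC tifGC) -dprodA defE.
- exact: abelemS sBE abE.
- by rewrite oB oE oc expnS mulKn.
Qed.

Lemma leq_s_k_quotient_setX (gT eT : finGroupType) (G M : {group gT})
    (E : {group eT}) k :
  2.-group G -> M <| G -> 2.-abelem E -> #|E| = #|M| ->
  s_k G k <= s_k (setX (G / M) E) k.
Proof.
move=> pG nsMG abE oE.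
have sGD : G \subset coset M @*^-1 setT by rewrite morphpreT normal_norm.
pose f := restrm sGD [morphism of pairg1 eT \o coset M].
have kerf : 'ker f = M.
  rewrite ker_restrm ker_comp ker_injm ?injm_pairg1 //.
  by rewrite -[_ @*^-1 1]/('ker _) ker_coset (setIidPr (normal_sub nsMG)).
have imf : f @* G = setX (G / M) 1.
  by rewrite morphim_restrm setIid morphim_comp morphim_pairg1.
pose E1 := setX_group [1 coset_of M]%G E.
have abE1 : 2.-abelem E1.
  by rewrite /E1 /= -morphim_pair1g morphim_abelem.
have oM := card_pgroup (pgroupS (normal_sub nsMG) pG).
apply: (leq_s_k_dprod_abelem (m := logn 2 #|M|) (f := f) (E := E1)) => //.
- by rewrite kerf.
- by rewrite imf setX_dprod.
- by rewrite cardsX cards1 mul1n oE.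
Qed.

Close Scope group_scope.

Theorem lemma2p2 (gT : finGroupType) (G M : {group gT}) (n r : nat)
    (eT : finGroupType) (E : {group eT}) :
  #|G| = 2 ^ n -> (M <| G)%g -> #|M| = 2 ^ r ->
  (2.-abelem E)%g -> #|E| = 2 ^ r ->
  forall k : nat, k <= n -> s_k G k <= s_k (setX (G / M)%g E) k.
Proof.
move=> oG nsMG oM abE oE k _; apply: leq_s_k_quotient_setX => //.
  by rewrite /pgroup oG pnatX pnat_id.
by rewrite oE oM.
Qed.
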